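(* Let $G$ be a maximal outerplanar graph with at least four vertices. Let $uv$ be an edge on its outer face with $\deg_G(u)>2$ and $\deg_G(v)>2$, let $w=\Delta(uv)$, and let $G_u=G_u(uv)$ and $G_v=G_v(uv)$ be the $uv$-segments. If $\mathrm{mvc}(G)=\mathrm{mvc}(G_u)+\mathrm{mvc}(G_v)-1$, then $$\mathrm{mvc}_u(G)=\mathrm{mvc}_{uw}(G_u)+\mathrm{mvc}(G_v)-1,\quad \mathrm{mvc}_v(G)=\mathrm{mvc}(G_u)+\mathrm{mvc}_{vw}(G_v)-1,$$ $$\mathrm{mvc}_{uv}(G)=\mathrm{mvc}_{uw}(G_u)+\mathrm{mvc}_{vw}(G_v)-1.$$
   Context: All graphs are finite and simple. A maximal outerplanar graph is an outerplanar graph to which no edge between existing vertices can be added while keeping it outerplanar. A fixed outerplanar embedding, with all vertices on the outer face, is assumed. For $S\subseteq V(G)$, $\mathrm{mvc}_S(G)$ is the minimum size of a vertex cover of $G$ containing $S$, and $\mathrm{mvc}(G)=\mathrm{mvc}_\emptyset(G)$. Braces are dropped for small sets, e.g. $\mathrm{mvc}_{uw}(G)=\mathrm{mvc}_{\{u,w\}}(G)$. For an edge $uv$ on the outer face of a maximal outerplanar graph with at least three vertices, $\Delta(uv)$ is the unique common neighbor of $u$ and $v$. $uv$-segments: let $w=\Delta(uv)$. $G_u(uv)$ is the maximal biconnected outerplanar subgraph of $G$ that has $uw$ on its outer face and does not contain $v$. Equivalently, it is the subgraph induced by $u$, $w$ and the vertices on the side of edge $uw$ not containing $v$; it is the single edge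 $uw$ if $\deg_G(u)=2$. $G_v(uv)$ is defined symmetrically. *)

From mathcomp Require Import all_boot.
Set Implicit Arguments. Unset Strict Implicit. Unset Printing Implicit Defensive.

Definition btw (p q r : nat) : bool :=
  [|| (p < q < r), (q < r < p) | (r < p < q)].

Section Graphs.
Variable T : finType.

Definition simple_graph (e : rel T) : Prop := symmetric e /\ irreflexive e.

(* chords ab and cd of the polygon (vertices placed on a circle in the order
   given by pos) cross *)
Definition crossing (pos : T -> nat) (a b c d : T) : bool :=
  [&& a != c, a != d, b != c, b != d &
      btw (pos a) (pos c) (pos b) != btw (pos a) (pos d) (pos b)].

Definition outerplanar_emb (e : rel T) (pos : T -> nat) : Prop :=
  injective pos /\ forall a b c d, e a b -> e c d -> ~~ crossing pos a b c d.

Definition outerplanar (e : rel T) : Prop := exists pos, outerplanar_emb e pos.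

Definition add_edge (e : rel T) (x y : T) : rel T :=
  fun a b => [|| e a b, (a == x) && (b == y) | (a == y) && (b == x)].

Definition maximal_outerplanar (e : rel T) : Prop :=
  [/\ simple_graph e, outerplanar e &
      forall x y, x != y -> ~~ e x y -> ~ outerplanar (add_edge e x y)].

(* uv is an edge on the outer face of the embedding pos: u, v are consecutive
   on the outer cycle *)
Definition outer_edge (e : rel T) (pos : T -> nat) (u v : T) : bool :=
  e u v && (~~ [exists x, btw (pos u) (pos x) (pos v)]
            || ~~ [exists x, btw (pos v) (pos x) (pos u)]).

Definition deg (e : rel T) (u : T) : nat := #|[set x | e u x]|.

Definition is_cover_in (e : rel T) (A C : {set T}) : bool :=
  [forall x, forall y, [&& x \in A, y \in A & e x y] ==> (x \in C) || (y \in C)].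

(* mvc_S of the subgraph induced by A: minimum size of a vertex cover
   containing S *)
Definition mvc_in (e : rel T) (A S : {set T}) : nat :=
  \big[minn/#|T|]_(C : {set T} | [&& S \subset C, C \subset A & is_cover_in e A C]) #|C|.

(* vertex set of the segment G_u(uv) with w = Delta(uv): u, w and the vertices
   on the side of the chord uw not containing v *)
Definition segment (pos : T -> nat) (u v w : T) : {set T} :=
  [set x | [|| x == u, x == w |
             btw (pos u) (pos x) (pos w) != btw (pos u) (pos v) (pos w)]].

End Graphs.

(* The chords uw and vw split G into the segments G_u and G_v: they cover all
   vertices, meet only in w, and every edge other than uv lies inside one of them.
   Hence a cover C of G restricts to covers of both segments whose sizes add up to
   #|C| + [w \in C], and covers of the two segments that both contain w glue, losing
   exactly one vertex, into a cover of G as soon as one of them covers uv.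
   Under mvc(G) = mvc(G_u) + mvc(G_v) - 1, every minimum cover of G contains w and
   restricts to minimum covers of the segments, one of which contains u or v.  So
   pinning u costs the same in G as in G_u, and pinning u and v together costs the
   segments at most one vertex more than pinning neither, which is the slack needed
   when a minimum cover of G through u and v avoids w. *)

From mathcomp Require Import all_boot all_order zify.

Set Implicit Arguments. Unset Strict Implicit. Unset Printing Implicit Defensive.

Import Order.TTheory.

Lemma cardsI1 (T : finType) (A : {set T}) x : #|A :&: [set x]| = (x \in A).
Proof.
have [xA | xA] := boolP (x \in A).
  by rewrite (setIidPr _) ?sub1set // cards1.
by rewrite setIC disjoint_setI0 ?cards0 // disjoints1.
Qed.

Lemma cardsU1I (T : finType) (A D : {set T}) x :
  x \in A -> #|(x |: D) :&: A| = (x \notin D) + #|D :&: A|.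
Proof. by move=> xA; rewrite setIUl (setIidPl _) ?sub1set // cardsU1 in_setI xA andbT. Qed.

Section VertexCovers.
Variables (T : finType) (e : rel T).
Implicit Types (A B S C D : {set T}).

Definition cover_of A S C := [&& S \subset C, C \subset A & is_cover_in e A C].

Lemma is_cover_inP A C :
  reflect (forall x y, x \in A -> y \in A -> e x y -> (x \in C) || (y \in C))
          (is_cover_in e A C).
Proof.
apply: (iffP forallP) => [coverC x y xA yA exy | coverC x].
  by have /forallP/(_ y) := coverC x; rewrite xA yA exy; apply.
by apply/forallP => y; apply/implyP => /and3P[]; apply: coverC.
Qed.

Lemma is_cover_in_subset A C C' :
  C \subset C' -> is_cover_in e A C -> is_cover_in e A C'.
Proof.
move=> /subsetP sCC' /is_cover_inP coverC; apply/is_cover_inP => x y xA yA exy.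
by case/orP: (coverC x y xA yA exy) => [/sCC' -> | /sCC' ->]; rewrite ?orbT.
Qed.

Lemma is_cover_in_restr A B C :
  B \subset A -> is_cover_in e A C -> is_cover_in e B (C :&: B).
Proof.
move=> /subsetP sBA /is_cover_inP coverC; apply/is_cover_inP => x y xB yB exy.
by rewrite !in_setI xB yB !andbT; apply: coverC => //; apply: sBA.
Qed.

Lemma cover_ofU1 A S C x : x \in A -> cover_of A S C -> cover_of A (x |: S) (x |: C).
Proof.
move=> xA /and3P[sSC sCA coverC].
rewrite /cover_of setUS // subUset sub1set xA sCA.
exact: is_cover_in_subset (subsetU1 x C) coverC.
Qed.

Lemma mvc_in_le A S C : cover_of A S C -> mvc_in e A S <= #|C|.
Proof. exact: (bigmin_le_cond #|T| (fun C => #|C|)). Qed.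

Lemma mvc_in_witness A S : S \subset A -> {C | cover_of A S C & mvc_in e A S = #|C|}.
Proof.
move=> sSA; have coverA : cover_of A S A.
  by rewrite /cover_of sSA subxx; apply/is_cover_inP => x y ->.
by have [C] := eq_bigmin A _ (fun C => #|C|) coverA (fun C _ => max_card C); exists C.
Qed.

Lemma mvc_in_restr_le A S D :
  is_cover_in e setT D -> S \subset A -> S \subset D -> mvc_in e A S <= #|D :&: A|.
Proof.
move=> coverD sSA sSD; apply: mvc_in_le.
by rewrite /cover_of subsetI sSD sSA subsetIr (is_cover_in_restr (subsetT A)).
Qed.

Lemma mvc_in_restrU1_le A S D x :
  is_cover_in e setT D -> x \in A -> S \subset A -> S \subset x |: D ->
  mvc_in e A S <= (x \notin D) + #|D :&: A|.
Proof.
move=> coverD xA sSA sSD; rewrite -cardsU1I //; apply: mvc_in_restr_le => //.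
exact: is_cover_in_subset (subsetU1 x D) coverD.
Qed.

End VertexCovers.

Record segment_decomposition (T : finType) (e : rel T) (Gu Gv : {set T}) (u v w : T) :
  Prop := SegmentDecomposition {
  segments_cover : Gu :|: Gv = setT;
  segments_meet : Gu :&: Gv = [set w];
  segment_mem_u : u \in Gu;
  segment_mem_v : v \in Gv;
  segment_cross_edge :
    forall x y, e x y -> x \in Gu :\ w -> y \in Gv :\ w -> (x == u) && (y == v) }.

Lemma segment_decomposition_sym (T : finType) (e : rel T) Gu Gv (u v w : T) :
  symmetric e -> segment_decomposition e Gu Gv u v w -> segment_decomposition e Gv Gu v u w.
Proof.
move=> e_sym [cover meet uGu vGv cross]; split; rewrite 1?setUC 1?setIC //.
move=> x y exy xGv yGu; rewrite e_sym in exy.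
by case/andP: (cross y x exy yGu xGv) => -> ->.
Qed.

Section SegmentDecomposition.
Variables (T : finType) (e : rel T) (Gu Gv : {set T}) (u v w : T).
Hypotheses (e_sym : symmetric e) (euv : e u v) (dec : segment_decomposition e Gu Gv u v w).
Implicit Types (S C D Cu Cv : {set T}).

Let w_Gu : w \in Gu.
Proof. by have := set11 w; rewrite -(segments_meet dec) in_setI => /andP[]. Qed.

Let w_Gv : w \in Gv.
Proof. by have := set11 w; rewrite -(segments_meet dec) in_setI => /andP[]. Qed.

Lemma card_segments C : #|C :&: Gu| + #|C :&: Gv| = #|C| + (w \in C).
Proof.
rewrite -cardsUI -setIUr -setIIr (segments_cover dec) (segments_meet dec).
by rewrite setIT cardsI1.
Qed.

Lemma card_glue Cu Cv : Cu \subset Gu -> Cv \subset Gv -> w \in Cu -> w \in Cv ->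
  #|Cu :|: Cv| + 1 = #|Cu| + #|Cv|.
Proof.
move=> sCu sCv wCu wCv; rewrite -cardsUI; suff -> : Cu :&: Cv = [set w] by rewrite cards1.
apply/eqP; rewrite eqEsubset sub1set in_setI wCu wCv -(segments_meet dec).
by rewrite setISS.
Qed.

Lemma is_cover_in_glue Cu Cv : is_cover_in e Gu Cu -> is_cover_in e Gv Cv ->
  w \in Cu -> (u \in Cu) || (v \in Cv) -> is_cover_in e setT (Cu :|: Cv).
Proof.
move=> /is_cover_inP coverCu /is_cover_inP coverCv wCu uv_covered.
apply/is_cover_inP => x y _ _ exy; rewrite !in_setU.
have [-> | xw] := eqVneq x w; first by rewrite wCu.
have [-> | yw] := eqVneq y w; first by rewrite wCu !orbT.
have side z : z != w -> z \in Gu :\ w \/ z \in Gv :\ w.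
  by move=> zw; apply/orP; rewrite !in_setD1 -andb_orr -in_setU (segments_cover dec) in_setT zw.
have inD1 G z : z \in G :\ w -> z \in G by case/setD1P.
have [xGu | xGv] := side x xw; have [yGu | yGv] := side y yw.
- by case/orP: (coverCu x y (inD1 _ _ xGu) (inD1 _ _ yGu) exy) => ->; rewrite ?orbT.
- case/andP: (segment_cross_edge dec exy xGu yGv) => /eqP-> /eqP->.
  by case/orP: uv_covered => ->; rewrite ?orbT.
- rewrite e_sym in exy; case/andP: (segment_cross_edge dec exy yGu xGv) => /eqP-> /eqP->.
  by case/orP: uv_covered => ->; rewrite ?orbT.
- by case/orP: (coverCv x y (inD1 _ _ xGv) (inD1 _ _ yGv) exy) => ->; rewrite ?orbT.
Qed.

Let uw_Gu : [set u; w] \subset Gu.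
Proof. by rewrite subUset !sub1set (segment_mem_u dec) w_Gu. Qed.

Let vw_Gv : [set v; w] \subset Gv.
Proof. by rewrite subUset !sub1set (segment_mem_v dec) w_Gv. Qed.

Lemma mvc_glue_le S Sv Cu Cv :
  cover_of e Gu [set u; w] Cu -> cover_of e Gv Sv Cv -> w \in Sv -> S \subset u |: Sv ->
  mvc_in e setT S + 1 <= #|Cu| + #|Cv|.
Proof.
move=> /and3P[uwCu sCu coverCu] /and3P[sSv sCv coverCv] wSv sS.
have [uCu wCu] : u \in Cu /\ w \in Cu by move: uwCu; rewrite subUset !sub1set => /andP.
rewrite -card_glue ?(subsetP sSv) // leq_add2r; apply: mvc_in_le.
apply/and3P; split; last by rewrite is_cover_in_glue ?uCu.
- by apply: subset_trans sS (setUSS _ sSv); rewrite sub1set.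
- exact: subsetT.
Qed.

Lemma mvc_pinned_uv_le :
  mvc_in e setT [set u; v] + 1 <= mvc_in e Gu [set u; w] + mvc_in e Gv [set v; w].
Proof.
have [Cu coverCu ->] := mvc_in_witness e uw_Gu.
have [Cv coverCv ->] := mvc_in_witness e vw_Gv.
apply: (mvc_glue_le coverCu coverCv); first by rewrite !inE eqxx orbT.
by rewrite setUS // sub1set setU11.
Qed.

Lemma mvc_pinned_u_ge :
  mvc_in e Gu [set u; w] + mvc_in e Gv set0 <= mvc_in e setT [set u] + 1.
Proof.
have [D /and3P[uD _ coverD] ->] := mvc_in_witness e (subsetT [set u]).
rewrite sub1set in uD.
have le_u : mvc_in e Gu [set u; w] <= (w \notin D) + #|D :&: Gu|.
  by apply: mvc_in_restrU1_le; rewrite // subUset !sub1set setU11 setU1r.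
have le_v := mvc_in_restr_le coverD (sub0set Gv) (sub0set D).
by have := card_segments D; case: (w \in D) le_u => /=; lia.
Qed.

Section Tight.
Hypothesis tight : mvc_in e setT set0 + 1 = mvc_in e Gu set0 + mvc_in e Gv set0.

Lemma tight_min_cover_split : exists Cu Cv,
  [/\ cover_of e Gu [set w] Cu, cover_of e Gv [set w] Cv,
      #|Cu| = mvc_in e Gu set0, #|Cv| = mvc_in e Gv set0 & (u \in Cu) || (v \in Cv)].
Proof.
have [C /and3P[_ _ coverC] min_C] := mvc_in_witness e (sub0set setT).
have le_u := mvc_in_restr_le coverC (sub0set Gu) (sub0set C).
have le_v := mvc_in_restr_le coverC (sub0set Gv) (sub0set C).
have split_C := card_segments C.
have wC : w \in C by move: split_C; case: (w \in C) => //=; lia.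
exists (C :&: Gu), (C :&: Gv); split; try lia.
- by rewrite /cover_of sub1set in_setI wC w_Gu subsetIr (is_cover_in_restr (subsetT _) coverC).
- by rewrite /cover_of sub1set in_setI wC w_Gv subsetIr (is_cover_in_restr (subsetT _) coverC).
- move/is_cover_inP: coverC => /(_ u v (in_setT u) (in_setT v) euv).
  by rewrite !in_setI (segment_mem_u dec) (segment_mem_v dec) !andbT.
Qed.

Lemma mvc_pinned_segments_le :
  mvc_in e Gu [set u; w] + mvc_in e Gv [set v; w] <= mvc_in e Gu set0 + mvc_in e Gv set0 + 1.
Proof.
have [Cu [Cv [coverCu coverCv <- <- uv_covered]]] := tight_min_cover_split.
have le_u := mvc_in_le (cover_ofU1 (segment_mem_u dec) coverCu).
have le_v := mvc_in_le (cover_ofU1 (segment_mem_v dec) coverCv).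
rewrite !cardsU1 in le_u le_v.
by case/orP: uv_covered => [uCu | vCv]; [rewrite uCu in le_u | rewrite vCv in le_v]; lia.
Qed.

Lemma mvc_pinned_u :
  mvc_in e setT [set u] + 1 = mvc_in e Gu [set u; w] + mvc_in e Gv set0.
Proof.
apply/eqP; rewrite eqn_leq mvc_pinned_u_ge andbT.
have [_ [Cv [_ coverCv _ <- _]]] := tight_min_cover_split.
have [Cu coverCu ->] := mvc_in_witness e uw_Gu.
by apply: (mvc_glue_le coverCu coverCv (set11 w)); rewrite sub1set setU11.
Qed.

Lemma mvc_pinned_uv :
  mvc_in e setT [set u; v] + 1 = mvc_in e Gu [set u; w] + mvc_in e Gv [set v; w].
Proof.
apply/eqP; rewrite eqn_leq mvc_pinned_uv_le /=.
have [D /and3P[uvD _ coverD] ->] := mvc_in_witness e (subsetT [set u; v]).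
move: uvD; rewrite subUset !sub1set => /andP[uD vD].
have le_u : mvc_in e Gu [set u; w] <= (w \notin D) + #|D :&: Gu|.
  by apply: mvc_in_restrU1_le; rewrite // subUset !sub1set setU11 setU1r.
have le_v : mvc_in e Gv [set v; w] <= (w \notin D) + #|D :&: Gv|.
  by apply: mvc_in_restrU1_le; rewrite // subUset !sub1set setU11 setU1r.
have le_u0 := mvc_in_restr_le coverD (sub0set Gu) (sub0set D).
have le_v0 := mvc_in_restr_le coverD (sub0set Gv) (sub0set D).
have := mvc_pinned_segments_le; have := card_segments D.
by case: (w \in D) le_u le_v => /=; lia.
Qed.

End Tight.
End SegmentDecomposition.

(* Chord ab separates c from d; this is the last conjunct of [crossing]. *)
Definition separates (a b c d : nat) : bool := btw a c b != btw a d b.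

Ltac decide_cyclic_order :=
  rewrite /separates /btw /= ?inE ?negb_or;
  repeat (match goal with |- context[?x < ?y] => case: (ltngtP x y) => ? end;
          rewrite /=; try done);
  try lia.

(* p, q, r are the positions of u, v, w, and the hypotheses [~~ btw p _ q] say that
   the outer edge uv is the arc from p to q.  The segments are then the arcs from
   q to r and from r to p. *)
Lemma separates_exclusive p q r a :
  uniq [:: p; q; r; a] -> ~~ btw p r q -> ~~ btw p a q ->
  separates p r a q = ~~ separates q r a p.
Proof. decide_cyclic_order. Qed.

Lemma separates_chord_first p q r a :
  uniq [:: p; q; r; a] -> ~~ btw p r q -> ~~ btw p a q ->
  ~~ separates p a q r -> separates p r a q.
Proof. decide_cyclic_order. Qed.

Lemma separates_chord_second p q r a :
  uniq [:: p; q; r; a] -> ~~ btw p r q -> ~~ btw p a q ->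
  ~~ separates q a p r -> separates q r a p.
Proof. decide_cyclic_order. Qed.

Lemma separates_chord_inner p q r a b :
  uniq [:: p; q; r; a; b] -> ~~ btw p r q -> ~~ btw p a q -> ~~ btw p b q ->
  ~~ separates a b p r -> ~~ separates a b q r -> separates p r a q = separates p r b q.
Proof. decide_cyclic_order. Qed.

Lemma mem_segment (T : finType) (pos : T -> nat) (a b c x : T) :
  x != a -> x != c -> (x \in segment pos a b c) = separates (pos a) (pos c) (pos x) (pos b).
Proof. by move=> xa xc; rewrite inE (negbTE xa) (negbTE xc). Qed.

Section OuterEdgeSegments.
Variables (T : finType) (e : rel T) (pos : T -> nat) (u v w : T).
Hypotheses (e_sym : symmetric e) (e_irr : irreflexive e) (emb : outerplanar_emb e pos).
Hypotheses (euv : e u v) (euw : e u w) (evw : e v w).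
Hypothesis arc_uv_empty : forall x, ~~ btw (pos u) (pos x) (pos v).

Local Notation Gu := (segment pos u v w).
Local Notation Gv := (segment pos v u w).

Let edge_neq x y : e x y -> x != y.
Proof. by move=> exy; apply: contraTneq exy => ->; rewrite e_irr. Qed.

Let uv : u != v := edge_neq euv.
Let uw : u != w := edge_neq euw.
Let vw : v != w := edge_neq evw.

Let uniq_uvw : uniq [:: u; v; w].
Proof. by rewrite /= !inE negb_or uv uw vw. Qed.

Let uniq_pos (s : seq T) : uniq s -> uniq (map pos s).
Proof. by rewrite (map_inj_uniq emb.1). Qed.

Let chord_not_separating a b c d : e a b -> e c d ->
  a != c -> a != d -> b != c -> b != d -> ~~ separates (pos a) (pos b) (pos c) (pos d).
Proof.
move=> eab ecd ac ad bc bd.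
by have := emb.2 a b c d eab ecd; rewrite /crossing ac ad bc bd.
Qed.

Let uniq_pos4 x : x != u -> x != v -> x != w -> uniq [:: pos u; pos v; pos w; pos x].
Proof.
move=> xu xv xw; change (uniq (map pos (rcons [:: u; v; w] x))); apply: uniq_pos.
by rewrite rcons_uniq uniq_uvw !inE !negb_or xu xv xw.
Qed.

Let uniq_pos5 x y : x != u -> x != v -> x != w -> y != u -> y != v -> y != w -> x != y ->
  uniq [:: pos u; pos v; pos w; pos x; pos y].
Proof.
move=> xu xv xw yu yv yw xy; change (uniq (map pos (rcons (rcons [:: u; v; w] x) y))).
apply: uniq_pos; rewrite !rcons_uniq uniq_uvw.
by rewrite !mem_rcons !inE !negb_or xu xv xw yu yv yw eq_sym xy.
Qed.

Lemma outer_segments_cover : Gu :|: Gv = setT.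
Proof.
apply/setP => x; rewrite in_setU in_setT.
have [-> | xu] := eqVneq x u; first by rewrite inE eqxx.
have [-> | xv] := eqVneq x v; first by rewrite orbC inE eqxx.
have [-> | xw] := eqVneq x w; first by rewrite inE eqxx orbT.
by rewrite !mem_segment // separates_exclusive ?orNb ?uniq_pos4.
Qed.

Lemma outer_segments_meet : Gu :&: Gv = [set w].
Proof.
apply/setP => x; rewrite in_setI in_set1.
have [-> | xu] := eqVneq x u.
  by rewrite [u \in Gv]mem_segment // /separates eqxx andbF (negbTE uw).
have [-> | xv] := eqVneq x v.
  by rewrite [v \in Gu]mem_segment ?(eq_sym v u) // /separates eqxx (negbTE vw).
have [-> | xw] := eqVneq x w; first by rewrite !inE eqxx !orbT.
by rewrite !mem_segment // separates_exclusive ?uniq_pos4 // andNb.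
Qed.

Lemma outer_segment_cross_edge x y :
  e x y -> x \in Gu :\ w -> y \in Gv :\ w -> (x == u) && (y == v).
Proof.
move=> exy /setD1P[xw xGu] /setD1P[yw yGv].
have only_w z : z != w -> z \in Gu -> z \in Gv -> False.
  by move=> zw zGu zGv; move: zw; rewrite -in_set1 -outer_segments_meet in_setI zGu zGv.
have xv : x != v by apply/eqP => Exv; apply: (only_w x xw xGu); rewrite Exv inE eqxx.
have yu : y != u by apply/eqP => Eyu; apply: (only_w y yw _ yGv); rewrite Eyu inE eqxx.
(* Otherwise, since xy crosses neither uw nor vw, an endpoint lies in both segments. *)
have [Exu | xu] := eqVneq x u.
  have [// | yv] := eqVneq y v.
  exfalso; apply: (only_w y yw _ yGv).
  rewrite mem_segment // separates_chord_first ?uniq_pos4 //.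
  by apply: chord_not_separating; rewrite -?Exu.
have [Eyv | yv] := eqVneq y v.
  exfalso; apply: (only_w x xw xGu).
  rewrite mem_segment // separates_chord_second ?uniq_pos4 //.
  have evx : e v x by rewrite e_sym -Eyv.
  by apply: (chord_not_separating evx euw); rewrite // eq_sym.
exfalso; apply: (only_w y yw _ yGv).
rewrite mem_segment // -(separates_chord_inner (uniq_pos5 _ _ _ _ _ _ (edge_neq exy))) //.
- by rewrite -mem_segment.
- exact: chord_not_separating.
- exact: chord_not_separating.
Qed.

Lemma outer_segment_decomposition : segment_decomposition e Gu Gv u v w.
Proof.
split; [exact: outer_segments_cover | exact: outer_segments_meet | | |].
- by rewrite inE eqxx.
- by rewrite inE eqxx.
- exact: outer_segment_cross_edge.
Qed.

End OuterEdgeSegments.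

Lemma outer_edge_segment_decomposition (T : finType) (e : rel T) (pos : T -> nat) (u v w : T) :
  simple_graph e -> outerplanar_emb e pos -> outer_edge e pos u v -> e u w -> e v w ->
  segment_decomposition e (segment pos u v w) (segment pos v u w) u v w.
Proof.
move=> [e_sym e_irr] emb /andP[euv arc] euw evw.
case/orP: arc => /existsPn arc_empty; first exact: outer_segment_decomposition.
apply: segment_decomposition_sym => //.
by apply: outer_segment_decomposition; rewrite // e_sym.
Qed.

Theorem lemma2 (T : finType) (e : rel T) (pos : T -> nat) (u v w : T) :
  4 <= #|T| ->
  maximal_outerplanar e ->
  outerplanar_emb e pos ->
  outer_edge e pos u v ->
  2 < deg e u -> 2 < deg e v ->
  e u w -> e v w ->
  let Gu := segment pos u v w in
  let Gv := segment pos v u w in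
  mvc_in e setT set0 + 1 = mvc_in e Gu set0 + mvc_in e Gv set0 ->
  [/\ mvc_in e setT [set u] + 1 = mvc_in e Gu [set u; w] + mvc_in e Gv set0,
      mvc_in e setT [set v] + 1 = mvc_in e Gu set0 + mvc_in e Gv [set v; w] &
      mvc_in e setT [set u; v] + 1 = mvc_in e Gu [set u; w] + mvc_in e Gv [set v; w]].
Proof.
move=> _ [simple_e _ _] emb outer _ _ euw evw Gu Gv tight.
have [e_sym _] := simple_e.
have euv : e u v by case/andP: outer.
have dec : segment_decomposition e Gu Gv u v w.
  exact: outer_edge_segment_decomposition.
have dec' := segment_decomposition_sym e_sym dec.
split; [exact: mvc_pinned_u dec tight | | exact: mvc_pinned_uv dec tight].
rewrite [RHS]addnC; apply: (mvc_pinned_u e_sym _ dec'); first by rewrite e_sym.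
by rewrite [RHS]addnC.
Qed.
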